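(* Let $n\in\mathbb N$ and $x_0\le x_1\le\dots\le x_n$ real numbers. For $j=1,\dots,n$ let $\widehat f_j\in C^\infty([x_{j-1},x_j])$ ($\mathbb F$-valued). Assume that $\widehat f_i^{(k)}(x_i)=\widehat f_{i+1}^{(k)}(x_i)$ for all $0\le k\le i-1$ and all $i\in\{1,\dots,n-1\}$. Then for every $\delta>0$ there exists $F\in C^{n-1}([x_0,x_n])$ such that for all $k=0,\dots,n-1$, $$|F^{(k)}(x)-\widehat f_j^{(k)}(x)|<\delta\quad\text{for all }x\in[x_{j-1},x_j]\text{ and all }j\in\{k+1,\dots,n\}.$$
   Context: $\mathbb F\in\{\mathbb R,\mathbb C\}$. Convention for possibly degenerate intervals: for $\alpha<\beta$, $C^m([\alpha,\beta])$ (resp. $C^\infty([\alpha,\beta])$) is the space of $m$-times continuously (resp. infinitely) differentiable functions on $[\alpha,\beta]$ with one-sided derivatives at the endpoints. For a degenerate interval $\{\alpha\}$, $C^m(\{\alpha\})$ is identified with $\mathbb F^{m+1}$ and $C^\infty(\{\alpha\})$ with the space of sequences $(a_k)_{k\ge0}\subset\mathbb F$, with the notation $f^{(k)}(\alpha)=a_k$. *)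

From Stdlib Require Import Reals.
From Coquelicot Require Import Coquelicot.
Open Scope R_scope.

Definition Icc (a b : R) (y : R) : Prop := a <= y <= b.

(* On a nondegenerate closed interval this is the usual derivative in the
   interior and the one-sided derivative at the endpoints. *)
Definition is_derive_within {V : NormedModule R_AbsRing}
  (D : R -> Prop) (f : R -> V) (x : R) (l : V) : Prop :=
  filterlim (fun y => scal (/ (y - x)) (minus (f y) (f x)))
    (within (fun y => D y /\ y <> x) (locally x)) (locally l).

Definition continuous_within {V : NormedModule R_AbsRing}
  (D : R -> Prop) (f : R -> V) (x : R) : Prop :=
  filterlim f (within D (locally x)) (locally (f x)).

(* An element of C^m([a,b]) is represented by the family of its derivatives
   g 0, g 1, ..., g m (g k plays the role of the k-th derivative; indices > m
   are irrelevant).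
   If a = b (degenerate interval {a}), following the paper's convention
   C^m({a}) = F^(m+1), the values g k a (k <= m) are arbitrary. *)
Definition Cm_on {V : NormedModule R_AbsRing} (m : nat) (a b : R)
  (g : nat -> R -> V) : Prop :=
  a < b ->
  (forall k, (k <= m)%nat -> forall x, Icc a b x ->
       continuous_within (Icc a b) (g k) x) /\
  (forall k, (k < m)%nat -> forall x, Icc a b x ->
       is_derive_within (Icc a b) (g k) x (g (S k) x)).

Definition Cinf_on {V : NormedModule R_AbsRing} (a b : R)
  (g : nat -> R -> V) : Prop :=
  forall m, Cm_on m a b g.

(* The statement of the theorem for values in V (V = R or V = C). 
   fh j k is the k-th derivative of \hat f_j; Fd k is F^(k). *)
Definition approx_statement (V : NormedModule R_AbsRing) : Prop :=
  forall (n : nat) (x : nat -> R),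
  (forall i, (i < n)%nat -> x i <= x (S i)) ->
  forall fh : nat -> nat -> R -> V,
  (forall j, (1 <= j <= n)%nat -> Cinf_on (x (j - 1)%nat) (x j) (fh j)) ->
  (forall i, (1 <= i <= n - 1)%nat -> forall k, (k <= i - 1)%nat ->
       fh i k (x i) = fh (S i) k (x i)) ->
  forall delta : R, 0 < delta ->
  exists Fd : nat -> R -> V,
    Cm_on (n - 1) (x 0%nat) (x n) Fd /\
    forall k, (k <= n - 1)%nat ->
    forall j, (k + 1 <= j <= n)%nat ->
    forall y, Icc (x (j - 1)%nat) (x j) y ->
      norm (minus (Fd k y) (fh j k y)) < delta.

From Stdlib Require Import Reals Lra Lia.
From Coquelicot Require Import Coquelicot.
Open Scope R_scope.

(* Induction on the number of intervals, for a strengthened statement: the nodes match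
   to order [i - 1 + r], [F] is [C^(n-1+r)] and approximates [f_j^(k)] for
   [k <= j - 1 + r], and [F] agrees with [f_1] to order [r] at [x_0].  Given such a [G]
   for the last intervals (with [r + 1]), keep [F = G] there and put [F = f_1 + c] on
   [[x_0, x_1]], where the correction [c] has the jumps [G^(k)(x_1) - f_1^(k)(x_1)] as
   derivatives at [x_1] (they vanish for [k <= r]), is flat to order [r] at [x_0], and
   has derivatives of order [<= r] below [delta].  It is a sum of rescaled bumps
   [e^p Q((y - x_1)/e)] with [Q(s) = s^p (1 + s)^(N+1)] on [[-1, 0]] and [0] to the
   left: their [k]-th derivatives are [O(e^(p-k))], small for [k <= r < p], while the
   [p]-th derivative at [x_1] does not depend on [e]. *)

Lemma filterlim_within_union {U : UniformSpace} (f : R -> U) (P Q S : R -> Prop) y L :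
  filterlim f (within P (locally y)) (locally L) ->
  filterlim f (within Q (locally y)) (locally L) ->
  (forall z, S z -> P z \/ Q z) ->
  filterlim f (within S (locally y)) (locally L).
Proof.
  intros HP HQ HS A HA. specialize (HP A HA). specialize (HQ A HA).
  unfold filtermap, within in *.
  generalize (filter_and _ _ HP HQ). apply filter_imp.
  intros z [H1 H2] Hz. destruct (HS z Hz); auto.
Qed.

Lemma filterlim_within_outside_Icc {U : UniformSpace} (f : R -> U) (P : R -> Prop) a b y L :
  (forall z, P z -> Icc a b z) -> ~ Icc a b y ->
  filterlim f (within P (locally y)) L.
Proof.
  intros HP Hy A _. unfold Icc in Hy.
  assert (Hd : 0 < Rmax (a - y) (y - b)).
  { apply Rnot_le_lt. intro H. apply Hy.
    generalize (Rmax_l (a - y) (y - b)) (Rmax_r (a - y) (y - b)). lra. }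
  exists (mkposreal _ Hd). intros z Hz Pz. exfalso.
  apply HP in Pz. unfold Icc in Pz.
  change (Rabs (z - y) < Rmax (a - y) (y - b)) in Hz.
  apply Rabs_def2 in Hz. unfold Rmax in Hz. destruct (Rle_dec (a - y) (y - b)); lra.
Qed.

Lemma filterlim_within_singleton {U : UniformSpace} (f : R -> U) (P : R -> Prop) y :
  (forall z, P z -> z = y) -> filterlim f (within P (locally y)) (locally (f y)).
Proof.
  intros HP A HA. unfold filtermap, within. apply filter_forall.
  intros z Pz. rewrite (HP z Pz). now apply locally_singleton.
Qed.

Section AbelianGroupArith.
Context {G : AbelianGroup}.

Lemma plus_minus_l (x y : G) : plus x (minus y x) = y.
Proof.
  unfold minus. rewrite (plus_comm y), plus_assoc, plus_opp_r. apply plus_zero_l.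
Qed.

Lemma minus_plus_l (x y : G) : minus (plus x y) x = y.
Proof.
  unfold minus. rewrite plus_comm, plus_assoc, plus_opp_l, plus_comm. apply plus_zero_r.
Qed.

Lemma minus_plus_plus (x y x' y' : G) :
  minus (plus x y) (plus x' y') = plus (minus x x') (minus y y').
Proof.
  unfold minus. rewrite opp_plus, <- !plus_assoc. f_equal.
  rewrite !plus_assoc. f_equal. apply plus_comm.
Qed.

End AbelianGroupArith.

Lemma norm_minus_self {V : NormedModule R_AbsRing} (u : V) : norm (minus u u) = 0.
Proof. rewrite minus_eq_zero. apply norm_zero. Qed.

Definition Cm_at {V : NormedModule R_AbsRing} (N : nat) (D : R -> Prop)
  (f : nat -> R -> V) (y : R) : Prop :=
  (forall k, (k <= N)%nat -> continuous_within D (f k) y) /\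
  (forall k, (k < N)%nat -> is_derive_within D (f k) y (f (S k) y)).

Section CmAt.
Context {V : NormedModule R_AbsRing}.
Implicit Types (f g : nat -> R -> V).

Lemma Cm_onE N a b f :
  Cm_on N a b f <-> (a < b -> forall y, Icc a b y -> Cm_at N (Icc a b) f y).
Proof.
  split.
  - intros H Hab y Hy. destruct (H Hab) as [H1 H2]. split; intros k Hk; auto.
  - intros H Hab. split; intros k Hk y Hy; apply (H Hab y Hy); auto.
Qed.

Lemma Cm_at_le N M D f y : (N <= M)%nat -> Cm_at M D f y -> Cm_at N D f y.
Proof. intros HNM [H1 H2]; split; intros k Hk; [apply H1 | apply H2]; lia. Qed.

Lemma Cm_on_le N M a b f : (N <= M)%nat -> Cm_on M a b f -> Cm_on N a b f.
Proof.
  intros HNM H. apply Cm_onE. intros Hab y Hy.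
  apply Cm_at_le with M; auto. now apply Cm_onE.
Qed.

Lemma Cm_at_ext N D f g y :
  (forall z, D z -> forall k, (k <= N)%nat -> f k z = g k z) -> D y ->
  Cm_at N D g y -> Cm_at N D f y.
Proof.
  intros He Dy [H1 H2]. split.
  - intros k Hk. unfold continuous_within. rewrite (He y Dy k Hk).
    apply filterlim_within_ext with (f := g k); [|apply H1; auto].
    intros z Dz. symmetry. auto.
  - intros k Hk. unfold is_derive_within. rewrite (He y Dy (S k) Hk).
    eapply filterlim_within_ext; [|apply (H2 k Hk)].
    intros z [Dz _]. simpl. rewrite (He z Dz k), (He y Dy k); auto; lia.
Qed.

Lemma Cm_at_singleton N a f : Cm_at N (Icc a a) f a.
Proof.
  split.
  - intros k _. apply filterlim_within_singleton. intros z Hz. unfold Icc in Hz; lra.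
  - intros k _ A _. unfold filtermap, within. apply filter_forall.
    intros z [Hz Hza]. unfold Icc in Hz. lra.
Qed.

Lemma Cm_at_of_Cm_on N a b f y :
  a <= b -> Cm_on N a b f -> Icc a b y -> Cm_at N (Icc a b) f y.
Proof.
  intros Hab Hf Hy. destruct (Rle_lt_or_eq_dec _ _ Hab) as [Hlt | <-].
  - now apply Cm_onE.
  - replace y with a by (unfold Icc in Hy; lra). apply Cm_at_singleton.
Qed.

Lemma Cm_at_zero N D y : Cm_at N D (fun _ _ => (zero : V)) y.
Proof.
  split; intros k _.
  - apply filterlim_const.
  - unfold is_derive_within. eapply filterlim_ext; [|apply filterlim_const].
    intros z. simpl. rewrite minus_eq_zero. symmetry. apply (scal_zero_r (V := V)).
Qed.

Lemma Cm_at_plus N D f g y :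
  Cm_at N D f y -> Cm_at N D g y -> Cm_at N D (fun k z => plus (f k z) (g k z)) y.
Proof.
  intros [F1 F2] [G1 G2]. split; intros k Hk.
  - eapply filterlim_comp_2; [apply F1 | apply G1 | apply filterlim_plus]; auto.
  - unfold is_derive_within.
    apply (filterlim_ext (fun z => plus (scal (/ (z - y)) (minus (f k z) (f k y)))
                                        (scal (/ (z - y)) (minus (g k z) (g k y))))).
    { intro z. rewrite (@minus_plus_plus (NormedModule.AbelianGroup R_AbsRing V)).
      symmetry. apply (@scal_distr_l R_Ring). }
    eapply filterlim_comp_2; [apply F2 | apply G2 | apply (filterlim_plus (V := V))]; auto.
Qed.

Lemma Cm_on_plus N a b f g :
  Cm_on N a b f -> Cm_on N a b g -> Cm_on N a b (fun k z => plus (f k z) (g k z)).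
Proof.
  rewrite !Cm_onE. intros Hf Hg Hab y Hy. apply Cm_at_plus; auto.
Qed.

Lemma Cm_at_scal N D (h : nat -> R -> R) (v : V) y :
  Cm_at (V := R_NormedModule) N D h y -> Cm_at N D (fun k z => scal (h k z) v) y.
Proof.
  intros [H1 H2]. split; intros k Hk.
  - apply (filterlim_comp _ _ _ (h k) (fun t : R => scal t v) _ (locally (h k y))).
    + now apply H1.
    + apply (filterlim_scal_l (V := V)).
  - unfold is_derive_within.
    apply (filterlim_ext (fun z => scal (/ (z - y) * (h k z - h k y)) v)).
    { intro z. rewrite <- (@scal_minus_distr_r R_AbsRing V), scal_assoc. reflexivity. }
    eapply (filterlim_comp _ _ _ _ (fun t : R => scal t v) _ (locally (h (S k) y))).
    + apply (H2 k Hk).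
    + apply (filterlim_scal_l (V := V)).
Qed.

Lemma Cm_at_glue N a m b f :
  (forall y, Icc a m y -> Cm_at N (Icc a m) f y) ->
  (forall y, Icc m b y -> Cm_at N (Icc m b) f y) ->
  forall y, Icc a b y -> Cm_at N (Icc a b) f y.
Proof.
  intros HA HB y Hy. unfold Icc in Hy. split; intros k Hk.
  - apply filterlim_within_union with (Icc a m) (Icc m b).
    + destruct (Rle_dec y m).
      * apply HA; unfold Icc; auto; lra.
      * apply filterlim_within_outside_Icc with a m; auto. unfold Icc; lra.
    + destruct (Rle_dec m y).
      * apply HB; unfold Icc; auto; lra.
      * apply filterlim_within_outside_Icc with m b; auto. unfold Icc; lra.
    + intros z Hz. unfold Icc in *. destruct (Rle_dec z m); [left | right]; lra.
  - apply filterlim_within_union with (fun z => Icc a m z /\ z <> y)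
                                      (fun z => Icc m b z /\ z <> y).
    + destruct (Rle_dec y m).
      * apply HA; unfold Icc; auto; lra.
      * apply filterlim_within_outside_Icc with a m; [tauto | unfold Icc; lra].
    + destruct (Rle_dec m y).
      * apply HB; unfold Icc; auto; lra.
      * apply filterlim_within_outside_Icc with m b; [tauto | unfold Icc; lra].
    + intros z [Hz Hzy]. unfold Icc in *.
      destruct (Rle_dec z m); [left | right]; split; auto; lra.
Qed.

Definition piecewise (m : R) f g : nat -> R -> V :=
  fun k y => if Rle_dec y m then f k y else g k y.

Lemma piecewise_left m f g k y : y <= m -> piecewise m f g k y = f k y.
Proof. intros Hy. unfold piecewise. destruct (Rle_dec y m); [easy | lra]. Qed.

Lemma piecewise_right m f g k y :
  m <= y -> f k m = g k m -> piecewise m f g k y = g k y.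
Proof.
  intros Hy Hm. unfold piecewise. destruct (Rle_dec y m); [|easy].
  now replace y with m by lra.
Qed.

Lemma piecewise_gt m f g k y : m < y -> piecewise m f g k y = g k y.
Proof. intros Hy. unfold piecewise. destruct (Rle_dec y m); [lra | easy]. Qed.

Lemma Cm_on_piecewise N a m b f g :
  a <= m <= b -> Cm_on N a m f -> Cm_on N m b g ->
  (forall k, (k <= N)%nat -> f k m = g k m) ->
  Cm_on N a b (piecewise m f g).
Proof.
  intros Hm Hf Hg Hfg. apply Cm_onE. intros _.
  apply Cm_at_glue with m.
  - intros y Hy. apply Cm_at_ext with f; [| exact Hy | apply Cm_at_of_Cm_on; auto; lra].
    intros z Hz k _. apply piecewise_left. unfold Icc in Hz; lra.
  - intros y Hy. apply Cm_at_ext with g; [| exact Hy | apply Cm_at_of_Cm_on; auto; lra].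
    intros z Hz k Hk. apply piecewise_right; auto. unfold Icc in Hz; lra.
Qed.

End CmAt.

Definition deriv_family (g : nat -> R -> R) : Prop :=
  forall k x, is_derive (g k) x (g (S k) x).

Lemma Cm_on_deriv_family (g : nat -> R -> R) N a b :
  deriv_family g -> Cm_on (V := R_NormedModule) N a b g.
Proof.
  intros Hg. apply Cm_onE. intros _ y _. split; intros k _.
  - eapply filterlim_filter_le_1; [apply (filter_le_within (F := locally y)) |].
    apply ex_derive_continuous. exists (g (S k) y). apply Hg.
  - assert (Hd := Hg k y). apply is_derive_Reals in Hd.
    intros P [eps HP]. destruct (Hd eps (cond_pos eps)) as [del Hdel].
    exists del. intros z Hz [_ Hzy]. apply HP.
    change (Rabs (/ (z - y) * (g k z - g k y) - g (S k) y) < eps).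
    change (Rabs (z - y) < del) in Hz.
    simpl in z. assert (Hne : z - y <> 0) by lra.
    specialize (Hdel (z - y) Hne Hz). replace (y + (z - y)) with z in Hdel by ring.
    replace (/ (z - y) * (g k z - g k y)) with ((g k z - g k y) / (z - y)) by (field; auto).
    exact Hdel.
Qed.

Definition one_family (k : nat) (x : R) : R := match k with O => 1 | _ => 0 end.

(* Leibniz rule: the derivatives of [(x - c) * g 0 x]. *)
Definition lin_mul_family (c : R) (g : nat -> R -> R) (k : nat) (x : R) : R :=
  (x - c) * g k x + INR k * g (pred k) x.

Lemma deriv_family_one : deriv_family one_family.
Proof. intros [|k] x; simpl; apply is_derive_Reals, derivable_pt_lim_const. Qed.

Lemma deriv_family_lin_mul c g : deriv_family g -> deriv_family (lin_mul_family c g).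
Proof.
  intros Hg k x. unfold lin_mul_family.
  replace ((x - c) * g (S k) x + INR (S k) * g (pred (S k)) x)
    with ((1 * g k x + (x - c) * g (S k) x) + INR k * g (S (pred k)) x)
    by (destruct k; simpl pred; [simpl | rewrite (S_INR (S k))]; ring).
  apply (is_derive_plus (K := R_AbsRing) (V := R_NormedModule)).
  - apply (Derive.is_derive_mult (fun t => t - c) (g k)); [| apply Hg].
    auto_derive; auto; ring.
  - apply is_derive_scal, Hg.
Qed.

Lemma deriv_family_rescale (Q : nat -> R -> R) (c e b : R) : e <> 0 -> deriv_family Q ->
  deriv_family (fun k y => c * (/ e) ^ k * Q k ((y - b) / e)).
Proof.
  intros He HQ k y.
  assert (Hl : is_derive (fun y => (y - b) / e) y (/ e))
    by (auto_derive; auto; field; auto).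
  assert (Hc := is_derive_comp (Q k) _ y _ _ (HQ k ((y - b) / e)) Hl).
  apply (is_derive_scal _ _ (c * (/ e) ^ k)) in Hc.
  replace (c * (/ e) ^ S k * Q (S k) ((y - b) / e))
    with (c * (/ e) ^ k * scal (/ e) (Q (S k) ((y - b) / e))); [exact Hc |].
  change (scal (/ e) (Q (S k) ((y - b) / e))) with (/ e * Q (S k) ((y - b) / e)).
  simpl. ring.
Qed.

Lemma lin_mul_family_vanish_same c g m :
  (forall k, (k < m)%nat -> g k c = 0) ->
  forall k, (k < S m)%nat -> lin_mul_family c g k c = 0.
Proof.
  intros H [|k] Hk; unfold lin_mul_family; simpl pred.
  - simpl. ring.
  - rewrite (H k) by lia. ring.
Qed.

Lemma lin_mul_family_vanish_other c c' g m :
  (forall k, (k < m)%nat -> g k c' = 0) ->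
  forall k, (k < m)%nat -> lin_mul_family c g k c' = 0.
Proof.
  intros H [|k] Hk; unfold lin_mul_family; simpl pred.
  - rewrite (H 0%nat) by lia. simpl. ring.
  - rewrite (H k), (H (S k)) by lia. ring.
Qed.

Definition bounded_family (K : nat) (g : nat -> R -> R) (M : R) : Prop :=
  forall k, (k <= K)%nat -> forall s, -1 <= s <= 0 -> Rabs (g k s) <= M.

Lemma lin_mul_family_bounded c g K M : -1 <= c <= 0 ->
  bounded_family K g M -> bounded_family K (lin_mul_family c g) (M + INR K * M).
Proof.
  intros Hc H k Hk s Hs. unfold lin_mul_family.
  assert (HM : 0 <= M).
  { apply Rle_trans with (Rabs (g 0%nat s)); [apply Rabs_pos | apply H; lia || lra]. }
  eapply Rle_trans; [apply Rabs_triang |]. rewrite !Rabs_mult.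
  apply Rplus_le_compat.
  - rewrite <- (Rmult_1_l M). apply Rmult_le_compat; try apply Rabs_pos.
    + apply Rabs_le. lra.
    + now apply H.
  - apply Rmult_le_compat; try apply Rabs_pos.
    + rewrite Rabs_right by apply Rle_ge, pos_INR. now apply le_INR.
    + apply H; [lia | easy].
Qed.

Lemma iter_lin_mul_family_bounded c g K M m : -1 <= c <= 0 ->
  bounded_family K g M -> exists M', bounded_family K (Nat.iter m (lin_mul_family c) g) M'.
Proof.
  intros Hc Hg. induction m as [|m [M' HM']]; [now exists M |].
  exists (M' + INR K * M'). now apply lin_mul_family_bounded.
Qed.

Lemma iter_lin_mul_family_vanish_same c g m :
  forall k, (k < m)%nat -> Nat.iter m (lin_mul_family c) g k c = 0.
Proof.
  induction m as [|m IH]; simpl; [lia |]. now apply lin_mul_family_vanish_same.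
Qed.

Lemma iter_lin_mul_family_vanish_other c c' g m p :
  (forall k, (k < p)%nat -> g k c' = 0) ->
  forall k, (k < p)%nat -> Nat.iter m (lin_mul_family c) g k c' = 0.
Proof.
  intros H. induction m as [|m IH]; simpl; [easy |]. now apply lin_mul_family_vanish_other.
Qed.

(* The derivatives of [s ^ p * (s + 1) ^ (N + 1)]. *)
Definition bump_profile (N p : nat) : nat -> R -> R :=
  Nat.iter p (lin_mul_family 0) (Nat.iter (S N) (lin_mul_family (-1)) one_family).

Lemma deriv_family_iter_lin_mul c g m :
  deriv_family g -> deriv_family (Nat.iter m (lin_mul_family c) g).
Proof. intros Hg. induction m; simpl; auto using deriv_family_lin_mul. Qed.

Lemma deriv_family_bump_profile N p : deriv_family (bump_profile N p).
Proof. apply deriv_family_iter_lin_mul, deriv_family_iter_lin_mul, deriv_family_one. Qed.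

Lemma bump_profile_vanish_left N p k : (k <= N)%nat -> bump_profile N p k (-1) = 0.
Proof.
  intros Hk. apply iter_lin_mul_family_vanish_other with (S N); [| lia].
  apply iter_lin_mul_family_vanish_same.
Qed.

Lemma bump_profile_vanish_right N p k : (k < p)%nat -> bump_profile N p k 0 = 0.
Proof. apply iter_lin_mul_family_vanish_same. Qed.

Lemma iter_lin_mul_family_zeroth c g m x :
  Nat.iter m (lin_mul_family c) g 0%nat x = (x - c) ^ m * g 0%nat x.
Proof.
  induction m as [|m IH]; [simpl; ring |].
  change (lin_mul_family c (Nat.iter m (lin_mul_family c) g) 0%nat x
          = (x - c) ^ S m * g 0%nat x).
  unfold lin_mul_family at 1. rewrite IH. simpl. ring.
Qed.

Lemma iter_lin_mul_family_diag_neq0 c g m :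
  g 0%nat c <> 0 -> Nat.iter m (lin_mul_family c) g m c <> 0.
Proof.
  intros H. induction m as [|m IH]; [exact H |].
  change (lin_mul_family c (Nat.iter m (lin_mul_family c) g) (S m) c <> 0).
  unfold lin_mul_family at 1. simpl pred. rewrite Rminus_diag, Rmult_0_l, Rplus_0_l.
  apply Rmult_integral_contrapositive. split; [apply not_0_INR; lia | exact IH].
Qed.

Lemma bump_profile_diag_neq0 N p : bump_profile N p p 0 <> 0.
Proof.
  apply iter_lin_mul_family_diag_neq0. rewrite iter_lin_mul_family_zeroth.
  replace (0 - -1) with 1 by ring. rewrite pow1. simpl. lra.
Qed.

Lemma bump_profile_bounded N p K : exists M, 0 < M /\ bounded_family K (bump_profile N p) M.
Proof.
  assert (H1 : bounded_family K one_family 1).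
  { intros [|k] _ s _; simpl; rewrite ?Rabs_R1, ?Rabs_R0; lra. }
  destruct (iter_lin_mul_family_bounded (-1) _ _ _ (S N) ltac:(lra) H1) as [M1 HM1].
  destruct (iter_lin_mul_family_bounded 0 _ _ _ p ltac:(lra) HM1) as [M HM].
  exists (Rabs M + 1). split; [generalize (Rabs_pos M); lra |].
  intros k Hk s Hs. generalize (HM k Hk s Hs) (Rle_abs M). unfold bump_profile. lra.
Qed.

Lemma pow_mul_inv_pow_le (e : R) (k p : nat) :
  0 < e <= 1 -> (k < p)%nat -> e ^ p * (/ e) ^ k <= e.
Proof.
  intros He Hkp. replace p with (k + S (p - S k))%nat by lia.
  rewrite pow_add.
  replace (e ^ k * e ^ S (p - S k) * (/ e) ^ k) with ((e * / e) ^ k * e ^ S (p - S k))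
    by (rewrite Rpow_mult_distr; ring).
  rewrite Rinv_r, pow1 by lra. simpl.
  assert (e ^ (p - S k) <= 1) by (rewrite <- (pow1 (p - S k)); apply pow_incr; lra).
  nra.
Qed.

Lemma rescaled_abs_le (e c q M : R) (k p : nat) :
  0 < e <= 1 -> (k < p)%nat -> c <> 0 -> Rabs q <= M ->
  Rabs (e ^ p / c * (/ e) ^ k * q) <= e * (M / Rabs c).
Proof.
  intros He Hkp Hc Hq.
  assert (Hpk := pow_mul_inv_pow_le e k p He Hkp).
  assert (Hk0 : 0 <= e ^ p * (/ e) ^ k)
    by (apply Rmult_le_pos; apply pow_le; [| left; apply Rinv_0_lt_compat]; lra).
  replace (e ^ p / c * (/ e) ^ k * q) with ((e ^ p * (/ e) ^ k) * (q / c)) by (field; easy).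
  rewrite Rabs_mult, Rabs_div, (Rabs_pos_eq _ Hk0) by easy.
  assert (0 < Rabs c) by now apply Rabs_pos_lt.
  apply Rmult_le_compat; [easy | | easy |].
  - apply Rdiv_le_0_compat; [apply Rabs_pos | easy].
  - apply Rmult_le_compat_r; [left; now apply Rinv_0_lt_compat | easy].
Qed.

Lemma bump_exists (a b : R) (N r p : nat) (eta : R) :
  a < b -> (r < p)%nat -> 0 < eta ->
  exists h : nat -> R -> R,
    Cm_on (V := R_NormedModule) N a b h /\
    (forall k, (k < p)%nat -> h k b = 0) /\ h p b = 1 /\
    (forall k, (k <= r)%nat -> h k a = 0) /\
    (forall k, (k <= r)%nat -> forall y, Icc a b y -> Rabs (h k y) < eta).
Proof.
  intros Hab Hrp Heta.
  set (Q := bump_profile N p).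
  assert (HQ0 : Q p 0 <> 0) by apply bump_profile_diag_neq0.
  assert (HQp : 0 < Rabs (Q p 0)) by now apply Rabs_pos_lt.
  destruct (bump_profile_bounded N p r) as [M [HM0 HM]].
  set (e := Rmin ((b - a) / 2) (Rmin 1 (eta * Rabs (Q p 0) / (2 * M)))).
  assert (He1 : e <= (b - a) / 2) by apply Rmin_l.
  assert (He2 : e <= 1) by (eapply Rle_trans; [apply Rmin_r | apply Rmin_l]).
  assert (He3 : e <= eta * Rabs (Q p 0) / (2 * M))
    by (eapply Rle_trans; [apply Rmin_r | apply Rmin_r]).
  assert (He0 : 0 < e).
  { apply Rmin_pos; [lra |]. apply Rmin_pos; [lra |].
    apply Rdiv_lt_0_compat; [apply Rmult_lt_0_compat |]; lra. }
  assert (Hbe : a <= b - e < b) by lra.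
  set (H := fun k y => e ^ p / Q p 0 * (/ e) ^ k * Q k ((y - b) / e)).
  assert (Hb : forall k, H k b = e ^ p / Q p 0 * (/ e) ^ k * Q k 0).
  { intros k. unfold H. now replace ((b - b) / e) with 0 by (field; lra). }
  exists (piecewise (b - e) (fun _ _ => 0) H).
  split; [| split; [| split; [| split]]].
  - apply Cm_on_piecewise; [lra | | |].
    + apply Cm_onE. intros _ y _. apply (Cm_at_zero (V := R_NormedModule)).
    + apply Cm_on_deriv_family, deriv_family_rescale; [lra |].
      apply deriv_family_bump_profile.
    + intros k Hk. unfold H. replace ((b - e - b) / e) with (-1) by (field; lra).
      unfold Q. rewrite (bump_profile_vanish_left N p k) by easy. now rewrite Rmult_0_r.
  - intros k Hk. rewrite piecewise_gt, Hb by apply Hbe.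
    unfold Q. rewrite (bump_profile_vanish_right N p k) by easy. apply Rmult_0_r.
  - rewrite piecewise_gt, Hb, pow_inv by apply Hbe. field.
    split; [apply pow_nonzero; lra | exact HQ0].
  - intros k _. apply piecewise_left, Hbe.
  - intros k Hk y Hy. unfold Icc in Hy. destruct (Rle_dec y (b - e)).
    + rewrite piecewise_left by easy. rewrite Rabs_R0. easy.
    + rewrite piecewise_gt by lra.
      assert (Hs : -1 <= (y - b) / e <= 0).
      { split; apply Rmult_le_reg_r with e; auto;
          unfold Rdiv; rewrite Rmult_assoc, Rinv_l by lra; lra. }
      apply Rle_lt_trans with (e * (M / Rabs (Q p 0))).
      * apply rescaled_abs_le; [lra | lia | exact HQ0 | now apply HM].
      * apply Rle_lt_trans with (eta * Rabs (Q p 0) / (2 * M) * (M / Rabs (Q p 0))).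
        -- apply Rmult_le_compat_r; [apply Rdiv_le_0_compat |]; lra.
        -- replace (eta * Rabs (Q p 0) / (2 * M) * (M / Rabs (Q p 0))) with (eta / 2)
             by (field; lra). lra.
Qed.

Section Correction.
Context {V : NormedModule R_AbsRing}.

Lemma correction_exists_aux (a b : R) (N r : nat) : a < b ->
  forall q, (q <= N - r)%nat ->
  forall D : nat -> V, (forall k, (k < S N - q)%nat -> D k = zero) ->
  forall del, 0 < del ->
  exists c : nat -> R -> V,
    Cm_on N a b c /\
    (forall k, (k <= N)%nat -> c k b = D k) /\
    (forall k, (k <= r)%nat -> c k a = zero) /\
    (forall k, (k <= r)%nat -> forall y, Icc a b y -> norm (c k y) < del).
Proof.
  intros Hab q. induction q as [|q IH]; intros Hq D HD del Hdel.
  - exists (fun _ _ => zero). split; [| split; [| split]].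
    + apply Cm_onE. intros _ y _. apply Cm_at_zero.
    + intros k Hk. symmetry. apply HD. lia.
    + easy.
    + intros k _ y _. now rewrite norm_zero.
  - set (p := (N - q)%nat). set (v := D p).
    assert (Hv : 0 <= norm v) by apply norm_ge_0.
    set (eta := del / 2 / (norm v + 1)).
    assert (Heta : 0 < eta) by (apply Rdiv_lt_0_compat; lra).
    destruct (bump_exists a b N r p eta Hab ltac:(lia) Heta)
      as [h [Hh [Hhb [Hhp [Hha Hhsmall]]]]].
    set (D' := fun k => minus (D k) (scal (h k b) v)).
    destruct (IH ltac:(lia) D') with (del := del / 2) as [c [Hc [Hcb [Hca Hcsmall]]]];
      [| lra |].
    { intros k Hk. unfold D'. destruct (Nat.eq_dec k p) as [-> | Hkp].
      - rewrite Hhp. change (minus v (scal one v) = zero).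
        rewrite scal_one. apply minus_eq_zero.
      - rewrite HD, Hhb by lia. change (minus zero (scal zero v) = zero).
        rewrite scal_zero_l. apply minus_eq_zero. }
    exists (fun k y => plus (scal (h k y) v) (c k y)). split; [| split; [| split]].
    + apply Cm_onE. intros Hab' y Hy. apply Cm_at_plus; [| now apply Cm_onE].
      apply Cm_at_scal. now apply Cm_onE.
    + intros k Hk. rewrite Hcb by easy. apply (plus_minus_l (G := V)).
    + intros k Hk. rewrite Hca, Hha by easy. change (plus (scal zero v) zero = zero).
      rewrite scal_zero_l. apply plus_zero_r.
    + intros k Hk y Hy.
      apply Rle_lt_trans with (norm (scal (h k y) v) + norm (c k y));
        [exact (norm_triangle (scal (h k y) v) (c k y)) |].
      assert (Hhv : norm (scal (h k y) v) <= del / 2).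
      { apply Rle_trans with (Rabs (h k y) * norm v); [apply (norm_scal (h k y) v) |].
        apply Rle_trans with (eta * (norm v + 1)).
        - apply Rmult_le_compat; [apply Rabs_pos | easy | | lra].
          left. now apply Hhsmall.
        - unfold eta. right. field. lra. }
      specialize (Hcsmall k Hk y Hy). lra.
Qed.

Lemma correction_exists (a b : R) (N r : nat) (D : nat -> V) (del : R) :
  a <= b -> 0 < del -> (forall k, (k <= r)%nat -> D k = zero) ->
  exists c : nat -> R -> V,
    Cm_on N a b c /\
    (forall k, (k <= N)%nat -> c k b = D k) /\
    (forall k, (k <= r)%nat -> c k a = zero) /\
    (forall k, (k <= r)%nat -> forall y, Icc a b y -> norm (c k y) < del).
Proof.
  intros Hab Hdel HD. destruct (Rle_lt_or_eq_dec _ _ Hab) as [Hlt | <-].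
  - apply (correction_exists_aux a b N r Hlt (N - r)); auto.
    intros k Hk. apply HD. lia.
  - exists (fun k _ => D k). split; [| split; [| split]].
    + intros H. lra.
    + easy.
    + easy.
    + intros k Hk y _. now rewrite HD, norm_zero.
Qed.

End Correction.

Lemma nondecreasing_le (x : nat -> R) n :
  (forall i, (i < n)%nat -> x i <= x (S i)) ->
  forall i j, (i <= j <= n)%nat -> x i <= x j.
Proof.
  intros Hx i j. induction j as [|j IH]; intros Hij.
  - replace i with 0%nat by lia. lra.
  - destruct (Nat.eq_dec i (S j)) as [-> | Hne]; [lra |].
    apply Rle_trans with (x j); [apply IH | apply Hx]; lia.
Qed.

Lemma approx_extend_left {V : NormedModule R_AbsRing} (N r : nat) (x0 x1 xe : R)
  (f1 G : nat -> R -> V) (delta : R) :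
  x0 <= x1 <= xe -> 0 < delta -> Cm_on N x0 x1 f1 -> Cm_on N x1 xe G ->
  (forall k, (k <= r)%nat -> G k x1 = f1 k x1) ->
  exists F : nat -> R -> V,
    Cm_on N x0 xe F /\
    (forall k y, (k <= r)%nat -> Icc x0 x1 y -> norm (minus (F k y) (f1 k y)) < delta) /\
    (forall k y, (k <= N)%nat -> Icc x1 xe y -> F k y = G k y) /\
    (forall k, (k <= r)%nat -> F k x0 = f1 k x0).
Proof.
  intros Hx Hdelta Hf1 HG HGf1.
  destruct (correction_exists x0 x1 N r (fun k => minus (G k x1) (f1 k x1)) delta)
    as [c [Hc [Hcb [Hca Hcsmall]]]]; [lra | easy | |].
  { intros k Hk. rewrite HGf1 by easy. apply (minus_eq_zero (G := V)). }
  set (F1 := fun k y => plus (f1 k y) (c k y)).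
  assert (HF1 : forall k, (k <= N)%nat -> F1 k x1 = G k x1).
  { intros k Hk. unfold F1. rewrite Hcb by easy. apply (plus_minus_l (G := V)). }
  exists (piecewise x1 F1 G). split; [| split; [| split]].
  - apply Cm_on_piecewise; [easy | now apply Cm_on_plus | easy | easy].
  - intros k y Hk Hy. rewrite piecewise_left by apply Hy.
    unfold F1. rewrite (minus_plus_l (G := V)). now apply Hcsmall.
  - intros k y Hk Hy. apply piecewise_right; [apply Hy | now apply HF1].
  - intros k Hk. rewrite piecewise_left by apply Hx.
    unfold F1. rewrite Hca by easy. apply plus_zero_r.
Qed.

Lemma approx_strong {V : NormedModule R_AbsRing} (n : nat) :
  forall (r : nat) (x : nat -> R) (fh : nat -> nat -> R -> V),
  (forall i, (i < n)%nat -> x i <= x (S i)) ->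
  (forall j, (1 <= j <= n)%nat -> Cinf_on (x (j - 1)%nat) (x j) (fh j)) ->
  (forall i, (1 <= i <= n - 1)%nat -> forall k, (k <= i - 1 + r)%nat ->
     fh i k (x i) = fh (S i) k (x i)) ->
  forall delta, 0 < delta ->
  exists F : nat -> R -> V,
    Cm_on (n - 1 + r) (x 0%nat) (x n) F /\
    (forall j k, (1 <= j <= n)%nat -> (k <= j - 1 + r)%nat ->
       forall y, Icc (x (j - 1)%nat) (x j) y -> norm (minus (F k y) (fh j k y)) < delta) /\
    (forall k, (k <= r)%nat -> F k (x 0%nat) = fh 1%nat k (x 0%nat)).
Proof.
  induction n as [|[|n] IH]; intros r x fh Hx Hf Hmatch delta Hdelta.
  - exists (fh 1%nat). split; [| split]; [intros H; lra | lia | easy].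
  - exists (fh 1%nat). split; [| split]; [now apply (Hf 1%nat) | | easy].
    intros j k Hj _ y _. replace j with 1%nat by lia.
    now rewrite norm_minus_self.
  - destruct (IH (S r) (fun i => x (S i)) (fun j => fh (S j))) with delta
      as [G [HG [HGclose HG0]]]; auto.
    { intros i Hi. apply Hx. lia. }
    { intros j Hj. replace (S (j - 1)) with (S j - 1)%nat by lia. apply Hf. lia. }
    { intros i Hi k Hk. apply (Hmatch (S i)); lia. }
    cbn beta in HG, HGclose, HG0.
    assert (Hxle := nondecreasing_le x _ Hx).
    destruct (approx_extend_left (S (S n) - 1 + r) r (x 0%nat) (x 1%nat) (x (S (S n)))
                (fh 1%nat) G delta) as [F [HF [Hclose1 [HFG HF0]]]]; auto.
    { split; apply Hxle; lia. }
    { apply (Hf 1%nat). lia. }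
    { eapply Cm_on_le; [| exact HG]. lia. }
    { intros k Hk. rewrite HG0 by lia. symmetry. apply (Hmatch 1%nat); simpl; lia. }
    exists F. split; [easy | split; [| easy]].
    intros [|[|j]] k Hj Hk y Hy; [lia | now apply Hclose1 |].
    simpl in Hy.
    assert (Hy1 : Icc (x 1%nat) (x (S (S n))) y).
    { assert (x 1%nat <= x (S j)) by (apply Hxle; lia).
      assert (x (S (S j)) <= x (S (S n))) by (apply Hxle; lia). unfold Icc in *; lra. }
    rewrite HFG by (easy || lia).
    apply (HGclose (S j)); [lia | lia |]. simpl. now rewrite Nat.sub_0_r.
Qed.

Lemma approx_statement_holds (V : NormedModule R_AbsRing) : approx_statement V.
Proof.
  intros n x Hx fh Hf Hmatch delta Hdelta.
  destruct (approx_strong n 0 x fh Hx Hf) with delta as [F [HF [Hclose _]]]; auto.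
  { intros i Hi k Hk. apply Hmatch; lia. }
  exists F. split.
  - now replace (n - 1)%nat with (n - 1 + 0)%nat by lia.
  - intros k Hk j Hj y Hy. apply Hclose; auto; lia.
Qed.

Theorem mainTheorem12 :
  approx_statement R_NormedModule /\ approx_statement C_R_NormedModule.
Proof. split; apply approx_statement_holds. Qed.
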